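(* Consider the discrete Motsch–Tadmor model described in the context, under the standing assumptions stated there. Suppose the initial data $(X(0),V(0))$ and the coupling strength $\kappa$ satisfy \[ \|\Delta^x(0)\|_F < M \quad\text{and}\quad \|\Delta^v(0)\|_F < \kappa \int_{\|\Delta^x(0)\|_F}^{M} \psi(s)\,ds , \] and let $(X(n),V(n))_{n\ge 0}$ be the solution of the discrete model with this initial data. Then: (i) $\sup_{0\le n<\infty} \|\Delta^x(n)\|_F \le M$; (ii) for any constant $0<C<1$, for all sufficiently small time-steps $h>0$ one has \[ \|\Delta^v(n)\|_F \le \|\Delta^v(0)\|_F\, e^{-C\kappa\psi(M) n h}\qquad \text{for all } n\ge 0 . \]
   Context: Discrete Motsch–Tadmor (MT) model: fix integers $N\ge1$, $d\ge1$, a coupling strength $\kappa>0$, a time-step $h>0$, and a communication function $a:[0,\infty)\to\mathbb{R}$. Standing assumptions: there are constants $0<c_1\le c_2$ with $c_1\le a(r)\le c_2$ for all $r\ge0$; $a$ is Lipschitz with constant $L_a>0$, i.e. $|a(r_1)-a(r_2)|\le L_a|r_1-r_2|$ for $r_1,r_2\ge0$; and $0<h<\min\{1,1/\kappa\}$. A solution is a sequence $(X(n),V(n))_{n\ge0}$ with $X(n)=(x_1(n),\dots,x_N(n))$, $V(n)=(v_1(n),\dots,v_N(n))\in(\mathbb{R}^d)^N$ satisfying, for $i=1,\dots,N$ and $n\ge0$, $x_i(n+1)=x_i(n)+h v_i(n)$, $v_i(n+1)=v_i(n)+h\kappa\sum_{j=1}^N\phi_{ij}(n)(v_j(n)-v_i(n))$,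 where $\phi_{ij}(n)=\frac{a(\|x_i(n)-x_j(n)\|)}{\sum_{k=1}^N a(\|x_i(n)-x_k(n)\|)}$ and $\|\cdot\|$ is the Euclidean norm. Notation: $\Delta^x_{ij}(n)=x_i(n)-x_j(n)$, $\Delta^v_{ij}(n)=v_i(n)-v_j(n)$, $\|\Delta^x(n)\|_F=(\sum_{i,j=1}^N\|\Delta^x_{ij}(n)\|^2)^{1/2}$, $\|\Delta^v(n)\|_F=(\sum_{i,j=1}^N\|\Delta^v_{ij}(n)\|^2)^{1/2}$. Constants: $\|\phi\|_{\mathrm{Lip}}:=\frac{L_a}{Nc_1}\left(1+\frac{c_2}{c_1}\right)$, $M:=\frac{1}{4N\|\phi\|_{\mathrm{Lip}}}$, and $\psi(s):=1-\|\phi\|_{\mathrm{Lip}}Ns$. *)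

From HB Require Import structures.
From mathcomp Require Import all_boot all_order all_algebra.
From mathcomp Require Import all_classical all_reals all_analysis.
Set Implicit Arguments. Unset Strict Implicit. Unset Printing Implicit Defensive.
Import Order.TTheory GRing.Theory Num.Theory.
Import numFieldNormedType.Exports.
Local Open Scope classical_set_scope.
Local Open Scope ring_scope.

Section MT.
Variables (R : realType) (N d : nat).

Definition enorm (u : 'rV[R]_d) : R := Num.sqrt (\sum_(k < d) (u 0 k) ^+ 2).

Definition frob (z : 'I_N -> 'rV[R]_d) : R :=
  Num.sqrt (\sum_(i < N) \sum_(j < N) (enorm (z i - z j)) ^+ 2).

Definition mt_phi (a : R -> R) (x : 'I_N -> 'rV[R]_d) (i j : 'I_N) : R :=
  a (enorm (x i - x j)) / \sum_(k < N) a (enorm (x i - x k)).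

Definition is_MT_solution (a : R -> R) (kappa h : R)
  (X V : nat -> 'I_N -> 'rV[R]_d) : Prop :=
  forall (n : nat) (i : 'I_N),
    X n.+1 i = X n i + h *: V n i /\
    V n.+1 i = V n i + (h * kappa) *: \sum_(j < N) (mt_phi a (X n) i j *: (V n j - V n i)).

Definition phiLip (La c1 c2 : R) : R := La / (N%:R * c1) * (1 + c2 / c1).
Definition MTM (La c1 c2 : R) : R := 1 / (4 * N%:R * phiLip La c1 c2).
Definition MTpsi (La c1 c2 : R) (s : R) : R := 1 - phiLip La c1 c2 * N%:R * s.

End MT.

From HB Require Import structures.
From mathcomp Require Import all_boot all_order all_algebra.
From mathcomp Require Import all_classical all_reals all_analysis.
From mathcomp Require Import ring lra.
Import Order.TTheory GRing.Theory Num.Theory.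
Import numFieldNormedType.Exports.
Set Implicit Arguments. Unset Strict Implicit. Unset Printing Implicit Defensive.
Local Open Scope classical_set_scope.
Local Open Scope ring_scope.

(* Write x_n and v_n for the position and velocity diameters. One step of the scheme
   gives x_(n+1) <= x_n + h v_n and v_(n+1) <= (1 - h kappa psi(x_n)) v_n: the MT weights
   are row-stochastic, and they are ||phi||_Lip-Lipschitz in the positions, so by
   Cauchy-Schwarz the part of the velocity update not damped by the factor 1 - h kappa is
   at most h kappa N ||phi||_Lip x_n v_n. With Psi the antiderivative of psi, the
   functional v_n + kappa Psi(x_n) is then nonincreasing as long as x_n <= M. A single
   step moves x by at most h v_0 <= M, and Psi is increasing on [0, 2M], so crossing M
   would raise kappa Psi(x) above v_0 + kappa Psi(x_0); this is excluded by the
   hypothesis on v_0. Hence x_n <= M forever, psi(x_n) >= psi(M) and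
   v_n <= (1 - h kappa psi(M))^n v_0 <= exp(- kappa psi(M) n h) v_0. *)

Lemma sum_pair3 (V : nmodType) (A B C : finType) (G : A * B * C -> V) :
  \sum_p G p = \sum_a \sum_b \sum_c G (a, b, c).
Proof.
transitivity (\sum_(p : A * B * C) G (p.1, p.2)); first by apply: eq_bigr => -[].
rewrite -(pair_bigA _ (fun ab c => G (ab, c))) /=.
transitivity (\sum_(ab : A * B) \sum_c G (ab.1, ab.2, c)); first by apply: eq_bigr => -[].
by rewrite (pair_bigA _ (fun a b => \sum_c G (a, b, c))).
Qed.

Section L2Norm.
Variables (R : rcfType) (T : finType).
Implicit Types (f g : T -> R) (a B : R).

Definition l2norm f : R := Num.sqrt (\sum_t f t ^+ 2).

Lemma l2norm_ge0 f : 0 <= l2norm f.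
Proof. exact: sqrtr_ge0. Qed.

Lemma sqr_l2norm f : l2norm f ^+ 2 = \sum_t f t ^+ 2.
Proof. by rewrite sqr_sqrtr // sumr_ge0 // => t _; exact: sqr_ge0. Qed.

Lemma l2norm_le f B : 0 <= B -> \sum_t f t ^+ 2 <= B ^+ 2 -> l2norm f <= B.
Proof. by move=> B0 fB; rewrite /l2norm -(ger0_norm B0) -sqrtr_sqr ler_wsqrtr. Qed.

Lemma eq_l2norm f g : f =1 g -> l2norm f = l2norm g.
Proof. by move=> fg; rewrite /l2norm; under eq_bigr do rewrite fg. Qed.

Lemma sqr_sum_mul_le f g :
  (\sum_t f t * g t) ^+ 2 <= (\sum_t f t ^+ 2) * (\sum_t g t ^+ 2).
Proof.
have lagrange : \sum_s \sum_t (f s * g t - f t * g s) ^+ 2 =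
    2 * ((\sum_t f t ^+ 2) * (\sum_t g t ^+ 2)) - 2 * (\sum_t f t * g t) ^+ 2.
  have fg : \sum_s \sum_t f s ^+ 2 * g t ^+ 2 = (\sum_t f t ^+ 2) * (\sum_t g t ^+ 2).
    by rewrite mulr_suml; apply: eq_bigr => s _; rewrite mulr_sumr.
  have gf : \sum_s \sum_t f t ^+ 2 * g s ^+ 2 = (\sum_t f t ^+ 2) * (\sum_t g t ^+ 2).
    by rewrite exchange_big.
  have cross : \sum_s \sum_t 2 * ((f s * g s) * (f t * g t)) = 2 * (\sum_t f t * g t) ^+ 2.
    rewrite expr2 mulr_suml mulr_sumr; apply: eq_bigr => s _.
    by rewrite !mulr_sumr; apply: eq_bigr => t _; ring.
  have expand s t : (f s * g t - f t * g s) ^+ 2 =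
      f s ^+ 2 * g t ^+ 2 + f t ^+ 2 * g s ^+ 2 - 2 * ((f s * g s) * (f t * g t)).
    by ring.
  under eq_bigr do under eq_bigr do rewrite expand.
  under eq_bigr do rewrite sumrB big_split /=.
  by rewrite sumrB big_split /= fg gf cross; ring.
have : 0 <= \sum_s \sum_t (f s * g t - f t * g s) ^+ 2.
  by apply: sumr_ge0 => s _; apply: sumr_ge0 => t _; exact: sqr_ge0.
rewrite lagrange; lra.
Qed.

Lemma sum_mul_le_l2norm f g : \sum_t f t * g t <= l2norm f * l2norm g.
Proof.
have fg0 : 0 <= l2norm f * l2norm g by rewrite mulr_ge0 ?l2norm_ge0.
rewrite -(ger0_norm fg0) -sqrtr_sqr exprMn !sqr_l2norm.
apply: le_trans (ler_norm _) _; rewrite -sqrtr_sqr ler_wsqrtr //.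
exact: sqr_sum_mul_le.
Qed.

Lemma l2normD f g : l2norm (fun t => f t + g t) <= l2norm f + l2norm g.
Proof.
apply: l2norm_le; first by rewrite addr_ge0 ?l2norm_ge0.
have -> : \sum_t (f t + g t) ^+ 2 =
    \sum_t f t ^+ 2 + \sum_t g t ^+ 2 + 2 * \sum_t f t * g t.
  by rewrite mulr_sumr -!big_split /=; apply: eq_bigr => t _; ring.
have := sum_mul_le_l2norm f g; rewrite -!sqr_l2norm; nra.
Qed.

Lemma l2normZ a f : l2norm (fun t => a * f t) = `|a| * l2norm f.
Proof.
rewrite /l2norm -sqrtr_sqr -sqrtrM ?sqr_ge0 // mulr_sumr.
by congr Num.sqrt; apply: eq_bigr => t _; rewrite exprMn.
Qed.

End L2Norm.

Section EuclideanNorm.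
Variables (R : realType) (d : nat).
Implicit Types u w : 'rV[R]_d.

Lemma enormE u : enorm u = l2norm (fun k => u 0 k).
Proof. by []. Qed.

Lemma enorm_ge0 u : 0 <= enorm u.
Proof. exact: l2norm_ge0. Qed.

Lemma sqr_enorm u : enorm u ^+ 2 = \sum_k u 0 k ^+ 2.
Proof. exact: sqr_l2norm. Qed.

Lemma enormD u w : enorm (u + w) <= enorm u + enorm w.
Proof.
rewrite !enormE; under eq_fun do rewrite mxE.
exact: l2normD.
Qed.

Lemma enormN u : enorm (- u) = enorm u.
Proof. by rewrite /enorm; under eq_bigr do rewrite mxE sqrrN. Qed.

Lemma enormB_sym u w : enorm (u - w) = enorm (w - u).
Proof. by rewrite -enormN opprB. Qed.

Lemma ler_dist_enorm u w : `|enorm u - enorm w| <= enorm (u - w).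
Proof.
have := enormD (u - w) w; have := enormD (w - u) u.
rewrite !subrK enormB_sym => ? ?.
by rewrite ler_norml; apply/andP; split; lra.
Qed.

End EuclideanNorm.

Section Frobenius.
Variables (R : realType) (N d : nat).
Implicit Types z w : 'I_N -> 'rV[R]_d.

Lemma frobE z :
  frob z = l2norm (fun p : 'I_N * 'I_N * 'I_d => (z p.1.1 - z p.1.2) 0 p.2).
Proof.
by rewrite /l2norm sum_pair3 /=; under [in RHS]eq_bigr do under eq_bigr do rewrite -sqr_enorm.
Qed.

Lemma frob_ge0 z : 0 <= frob z.
Proof. by rewrite frobE l2norm_ge0. Qed.

Lemma sqr_frob z : frob z ^+ 2 = \sum_i \sum_j enorm (z i - z j) ^+ 2.
Proof.
by rewrite sqr_sqrtr // sumr_ge0 // => i _; rewrite sumr_ge0 // => j _; rewrite sqr_ge0.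
Qed.

Lemma frobDZ z w a : frob (fun i => z i + a *: w i) <= frob z + `|a| * frob w.
Proof.
rewrite !frobE -l2normZ; apply: le_trans _ (l2normD _ _).
by rewrite le_eqVlt; apply/orP; left; apply/eqP/eq_l2norm => p; rewrite !mxE; ring.
Qed.

Lemma sum_sqr_enorm_le_frob z i : \sum_k enorm (z k - z i) ^+ 2 <= frob z ^+ 2.
Proof.
rewrite sqr_frob [X in _ <= X](bigD1 i) //= -[X in X <= _]addr0; apply: lerD.
- by apply: ler_sum => k _; rewrite enormB_sym.
- by rewrite sumr_ge0 // => j _; rewrite sumr_ge0 // => k _; rewrite sqr_ge0.
Qed.

End Frobenius.

Lemma ler_dist_ratio (R : numFieldType) (p q S S' s alpha beta c : R) :
  0 < s -> s <= S -> s <= S' -> `|p - q| <= alpha -> `|S - S'| <= beta ->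
  0 <= q <= c -> `|p / S - q / S'| <= alpha / s + c * beta / s ^+ 2.
Proof.
move=> s0 sS sS' pq SS' /andP[q0 qc].
have S0 : 0 < S by exact: lt_le_trans sS.
have S'0 : 0 < S' by exact: lt_le_trans sS'.
have -> : p / S - q / S' = (p - q) / S + q * (S' - S) / (S * S').
  by field; rewrite !gt_eqF.
apply: le_trans (ler_normD _ _) _; rewrite !normrM !normfV [`|S' - S|]distrC.
rewrite (gtr0_norm S0) (gtr0_norm (mulr_gt0 S0 S'0)) (ger0_norm q0).
have S0' := ltW S0; have S'0' := ltW S'0.
apply: lerD; apply: ler_pM; rewrite ?invr_ge0 ?mulr_ge0 ?normr_ge0 //.
- by rewrite lef_pV2 ?posrE.
- exact: ler_pM.
- rewrite lef_pV2 ?posrE ?exprn_gt0 ?mulr_gt0 //.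
  by rewrite expr2 ler_pM // ltW.
Qed.

Lemma phiLip_ge0 (R : realType) (N : nat) (La c1 c2 : R) :
  0 <= La -> 0 < c1 -> c1 <= c2 -> 0 <= phiLip N La c1 c2.
Proof.
move=> La_ge0 c1_gt0 c12; have c1_ge0 := ltW c1_gt0; have c2_ge0 := le_trans c1_ge0 c12.
by rewrite /phiLip mulr_ge0 ?divr_ge0 ?addr_ge0 ?mulr_ge0 ?invr_ge0 ?ler0n.
Qed.

Section Weights.
Variables (R : realType) (N d : nat) (a : R -> R) (c1 c2 La : R).
Hypotheses (N_gt0 : (0 < N)%N) (c1_gt0 : 0 < c1) (La_ge0 : 0 <= La).
Hypothesis a_bounds : forall r, 0 <= r -> c1 <= a r /\ a r <= c2.
Hypothesis a_lip :
  forall r1 r2, 0 <= r1 -> 0 <= r2 -> `|a r1 - a r2| <= La * `|r1 - r2|.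
Variable x : 'I_N -> 'rV[R]_d.

Lemma mt_denom_ge i : N%:R * c1 <= \sum_k a (enorm (x i - x k)).
Proof.
rewrite -[N in N%:R]card_ord mulr_natl -sumr_const.
by apply: ler_sum => k _; case: (a_bounds (enorm_ge0 (x i - x k))).
Qed.

Lemma mt_denom_gt0 i : 0 < \sum_k a (enorm (x i - x k)).
Proof. by apply: lt_le_trans (mt_denom_ge i); rewrite mulr_gt0 ?ltr0n. Qed.

Lemma sum_mt_phi i : \sum_j mt_phi a x i j = 1.
Proof. by rewrite /mt_phi -mulr_suml mulfV // gt_eqF ?mt_denom_gt0. Qed.

Lemma mt_coef_lip i j k :
  `|a (enorm (x i - x k)) - a (enorm (x j - x k))| <= La * enorm (x i - x j).
Proof.
apply: le_trans (a_lip (enorm_ge0 _) (enorm_ge0 _)) _.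
have -> : x i - x j = (x i - x k) - (x j - x k) by rewrite opprB addrA subrK.
by rewrite ler_wpM2l // ler_dist_enorm.
Qed.

Lemma mt_denom_lip i j :
  `|\sum_k a (enorm (x i - x k)) - \sum_k a (enorm (x j - x k))|
    <= N%:R * (La * enorm (x i - x j)).
Proof.
rewrite -sumrB -[N in N%:R]card_ord mulr_natl -sumr_const.
by apply: le_trans (ler_norm_sum _ _ _) _; apply: ler_sum => k _; exact: mt_coef_lip.
Qed.

Lemma mt_phi_lip i j k :
  `|mt_phi a x i k - mt_phi a x j k| <= phiLip N La c1 c2 * enorm (x i - x j).
Proof.
have [c1a ac2] := a_bounds (enorm_ge0 (x j - x k)).
apply: le_trans (ler_dist_ratio _ (mt_denom_ge i) (mt_denom_ge j) (mt_coef_lip i j k)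
  (mt_denom_lip i j) _) _.
- by rewrite mulr_gt0 ?ltr0n.
- by apply/andP; split; [exact: le_trans (ltW c1_gt0) c1a | exact: ac2].
rewrite le_eqVlt; apply/orP; left; apply/eqP.
by rewrite /phiLip; field; rewrite pnatr_eq0 -lt0n N_gt0 gt_eqF.
Qed.

End Weights.

Lemma consensus_step_diff (R : ringType) (V : lmodType R) (n : nat)
    (w : 'I_n -> 'I_n -> R) (v : 'I_n -> V) (t : R) i j :
  \sum_k w j k = 1 ->
  (v i + t *: \sum_k w i k *: (v k - v i)) - (v j + t *: \sum_k w j k *: (v k - v j)) =
  (1 - t) *: (v i - v j) + t *: \sum_k (w i k - w j k) *: (v k - v i).
Proof.
move=> wj1.
have shift : \sum_k w j k *: (v k - v j) = \sum_k w j k *: (v k - v i) + (v i - v j).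
  rewrite -[X in _ + X]scale1r -wj1 scaler_suml -big_split /=.
  by apply: eq_bigr => k _; rewrite -scalerDr addrA subrK.
under [X in _ = _ + t *: X]eq_bigr do rewrite scalerBl.
rewrite opprD addrACA -scalerBr shift sumrB opprD addrA.
by rewrite scalerBr scalerBl scale1r addrA [RHS]addrAC.
Qed.

Section CrossTerm.
Variables (R : realType) (N d : nat) (L : R) (w : 'I_N -> 'I_N -> R).
Variable x : 'I_N -> 'rV[R]_d.
Hypothesis L_ge0 : 0 <= L.
Hypothesis w_lip : forall i j k, `|w i k - w j k| <= L * enorm (x i - x j).
Variable v : 'I_N -> 'rV[R]_d.

Lemma sqr_cross_entry_le i j c :
  (\sum_k (w i k - w j k) * (v k - v i) 0 c) ^+ 2
    <= N%:R * (L * enorm (x i - x j)) ^+ 2 * \sum_k ((v k - v i) 0 c) ^+ 2.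
Proof.
apply: le_trans (sqr_sum_mul_le _ _) _.
apply: ler_wpM2r; first by rewrite sumr_ge0 // => k _; exact: sqr_ge0.
rewrite -[N in N%:R]card_ord mulr_natl -sumr_const; apply: ler_sum => k _.
rewrite -real_normK ?num_real //; apply: lerXn2r; rewrite ?nnegrE ?normr_ge0 //.
exact: le_trans (normr_ge0 _) (w_lip i j k).
Qed.

Lemma cross_term_le :
  l2norm (fun p : 'I_N * 'I_N * 'I_d =>
            \sum_k (w p.1.1 k - w p.1.2 k) * (v k - v p.1.1) 0 p.2)
    <= N%:R * L * frob x * frob v.
Proof.
apply: l2norm_le; first by rewrite !mulr_ge0 ?ler0n ?frob_ge0.
rewrite sum_pair3 /=.
apply: (@le_trans _ _ (\sum_i \sum_j N%:R * (L * enorm (x i - x j)) ^+ 2 * frob v ^+ 2)).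
  apply: ler_sum => i _; apply: ler_sum => j _.
  apply: le_trans (ler_sum _ (fun c _ => sqr_cross_entry_le i j c)) _.
  rewrite -mulr_sumr; apply: ler_wpM2l; first by rewrite mulr_ge0 ?ler0n ?sqr_ge0.
  rewrite exchange_big /=; under eq_bigr do rewrite -sqr_enorm.
  exact: sum_sqr_enorm_le_frob.
(* The estimate really gives a factor sqrt N; N <= N ^ 2 matches the constant N ||phi||_Lip. *)
have N_le_sqr : N%:R <= N%:R ^+ 2 :> R.
  by case: N => [|n]; rewrite ?expr0n //= expr2 ler_peMl ?ler1n.
have -> : \sum_i \sum_j N%:R * (L * enorm (x i - x j)) ^+ 2 * frob v ^+ 2 =
    N%:R * (L ^+ 2 * (frob v ^+ 2 * frob x ^+ 2)).
  rewrite (sqr_frob x) !mulr_sumr; apply: eq_bigr => i _.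
  by rewrite !mulr_sumr; apply: eq_bigr => j _; ring.
rewrite [X in _ <= X](_ : _ = N%:R ^+ 2 * (L ^+ 2 * (frob v ^+ 2 * frob x ^+ 2))); last by ring.
have P_ge0 : 0 <= L ^+ 2 * (frob v ^+ 2 * frob x ^+ 2).
  by rewrite mulr_ge0 ?sqr_ge0 // mulr_ge0 ?sqr_ge0.
exact (ler_wpM2r P_ge0 N_le_sqr).
Qed.
End CrossTerm.

Section Steps.
Variables (R : realType) (N d : nat) (a : R -> R) (kappa h : R).
Variables X V : nat -> 'I_N -> 'rV[R]_d.
Hypothesis sol : is_MT_solution a kappa h X V.

Lemma mt_position_step n : 0 <= h -> frob (X n.+1) <= frob (X n) + h * frob (V n).
Proof.
move=> h_ge0.
have -> : X n.+1 = (fun i => X n i + h *: V n i) by apply/funext => i; case: (sol n i).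
by rewrite -[h in h * _](ger0_norm h_ge0) frobDZ.
Qed.

Variables c1 c2 La : R.
Hypotheses (N_gt0 : (0 < N)%N) (c1_gt0 : 0 < c1) (c1_le_c2 : c1 <= c2).
Hypotheses (La_ge0 : 0 <= La).
Hypothesis a_bounds : forall r, 0 <= r -> c1 <= a r /\ a r <= c2.
Hypothesis a_lip :
  forall r1 r2, 0 <= r1 -> 0 <= r2 -> `|a r1 - a r2| <= La * `|r1 - r2|.

Lemma mt_velocity_step n : 0 <= h * kappa -> h * kappa <= 1 ->
  frob (V n.+1) <=
    (1 - h * kappa * (1 - phiLip N La c1 c2 * N%:R * frob (X n))) * frob (V n).
Proof.
move=> t_ge0 t_le1; set t := h * kappa.
have diff i j c : (V n.+1 i - V n.+1 j) 0 c = (1 - t) * (V n i - V n j) 0 c +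
    t * \sum_k (mt_phi a (X n) i k - mt_phi a (X n) j k) * (V n k - V n i) 0 c.
  have [_ ->] := sol n i; have [_ ->] := sol n j.
  rewrite consensus_step_diff; last exact: (sum_mt_phi N_gt0 c1_gt0 a_bounds).
  rewrite !mxE summxE; congr (_ + _ * _); apply: eq_bigr => k _.
  by rewrite !mxE.
rewrite frobE (eq_l2norm (fun p => diff p.1.1 p.1.2 p.2)).
apply: le_trans (l2normD _ _) _.
rewrite !l2normZ -frobE ger0_norm ?subr_ge0 // (ger0_norm t_ge0).
have cross := cross_term_le (phiLip_ge0 N La_ge0 c1_gt0 c1_le_c2)
  (mt_phi_lip N_gt0 c1_gt0 La_ge0 a_bounds a_lip (X n)) (V n).
rewrite (_ : (1 - t * _) * _ = (1 - t) * frob (V n) +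
  t * (N%:R * phiLip N La c1 c2 * frob (X n) * frob (V n))); last by ring.
by rewrite lerD // ler_wpM2l.
Qed.

End Steps.

Definition Psi (R : realFieldType) (K s : R) : R := s - K / 2 * s ^+ 2.

Section PsiFacts.
Variables (R : realFieldType) (K : R).
Hypothesis K_ge0 : 0 <= K.

Lemma PsiB y z : Psi K y - Psi K z = (y - z) * (1 - K * (y + z) / 2).
Proof. by rewrite /Psi; field. Qed.

Lemma Psi_lt z y : z < y -> K * (y + z) < 2 -> Psi K z < Psi K y.
Proof. by move=> zy Kyz; rewrite -subr_gt0 PsiB mulr_gt0 ?subr_gt0 //; lra. Qed.

Lemma PsiB_le z y delta : 0 <= delta -> K * z <= 1 -> y <= z + delta ->
  Psi K y - Psi K z <= delta * (1 - K * z).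
Proof.
move=> delta_ge0 Kz yz; rewrite PsiB.
have [zy | yz'] := leP z y.
- have Ky : K * z <= K * y by rewrite ler_wpM2l.
  apply: le_trans (_ : (y - z) * (1 - K * z) <= _); last by apply: ler_wpM2r; lra.
  by apply: ler_wpM2l; lra.
- have Ky : K * y <= K * z by rewrite ler_wpM2l // ltW.
  apply: le_trans (_ : 0 <= _); last by rewrite mulr_ge0 //; lra.
  by rewrite nmulr_rle0; lra.
Qed.

End PsiFacts.

Section Lyapunov.
Variables (R : realFieldType) (K M kappa h : R) (x v : nat -> R).
Hypotheses (K_gt0 : 0 < K) (M_gt0 : 0 < M) (KM_le : 4 * (K * M) <= 1).
Hypotheses (kappa_gt0 : 0 < kappa) (h_ge0 : 0 <= h) (hk_le1 : h * kappa <= 1).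
Hypotheses (x_ge0 : forall n, 0 <= x n) (v_ge0 : forall n, 0 <= v n).
Hypothesis x_step : forall n, x n.+1 <= x n + h * v n.
Hypothesis v_step : forall n, v n.+1 <= (1 - h * kappa * (1 - K * x n)) * v n.
Hypothesis x0_le : x 0 <= M.
Hypothesis v0_lt : v 0 < kappa * (Psi K M - Psi K (x 0)).

Let r : R := 1 - h * kappa * (1 - K * M).

Let hk_ge0 : 0 <= h * kappa := mulr_ge0 h_ge0 (ltW kappa_gt0).
Let KM_ge0 : 0 <= K * M := mulr_ge0 (ltW K_gt0) (ltW M_gt0).
Let KM_le1 : K * M <= 1. Proof. by have := KM_ge0; have := KM_le; lra. Qed.

Lemma rate_ge0 : 0 <= r.
Proof.
have -> : r = 1 - h * kappa + h * kappa * (K * M) by rewrite /r; ring.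
by apply: addr_ge0; [rewrite subr_ge0 | exact: mulr_ge0].
Qed.

Lemma rate_le1 : r <= 1.
Proof.
have : 0 <= 1 - K * M by rewrite subr_ge0 KM_le1.
by move/(mulr_ge0 hk_ge0); rewrite /r gerBl.
Qed.

Lemma velocity_contract n : x n <= M -> v n.+1 <= r * v n.
Proof.
move=> xM; apply: le_trans (v_step n) _; apply: ler_wpM2r; first exact: v_ge0.
by have := ler_wpM2l hk_ge0 (ler_wpM2l (ltW K_gt0) xM); rewrite /r; lra.
Qed.

Lemma lyapunov_step n : x n <= M ->
  v n.+1 + kappa * Psi K (x n.+1) <= v n + kappa * Psi K (x n).
Proof.
move=> xM.
have Kx_le1 : K * x n <= 1 := le_trans (ler_wpM2l (ltW K_gt0) xM) KM_le1.
have := PsiB_le (ltW K_gt0) (mulr_ge0 h_ge0 (v_ge0 n)) Kx_le1 (x_step n).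
move/(ler_wpM2l (ltW kappa_gt0)); have := v_step n; lra.
Qed.

Lemma velocity_decay_until n : (forall m, (m < n)%N -> x m <= M) -> v n <= v 0 * r ^+ n.
Proof.
elim: n => [|n IH] xM; first by rewrite expr0 mulr1.
apply: le_trans (velocity_contract (xM n (ltnSn n))) _.
rewrite exprS mulrCA; apply: (ler_wpM2l rate_ge0).
by apply: IH => m mn; apply/xM/ltnW.
Qed.

Lemma lyapunov_until n : (forall m, (m < n)%N -> x m <= M) ->
  v n + kappa * Psi K (x n) <= v 0 + kappa * Psi K (x 0).
Proof.
elim: n => [|n IH] xM //.
apply: le_trans (lyapunov_step (xM n (ltnSn n))) _.
by apply: IH => m mn; apply/xM/ltnW.
Qed.

Lemma Psi_gap_le : Psi K M - Psi K (x 0) <= M.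
Proof.
have Kx0 : 0 <= 1 - K * x 0.
  by rewrite subr_ge0 (le_trans (ler_wpM2l (ltW K_gt0) x0_le) KM_le1).
have := mulr_ge0 (x_ge0 0) Kx0; have := mulr_ge0 KM_ge0 (ltW M_gt0).
by have := x_ge0 0; rewrite /Psi; lra.
Qed.

Lemma hv0_le_M : h * v 0 <= M.
Proof.
apply: le_trans (ler_wpM2l h_ge0 (ltW v0_lt)) _.
rewrite mulrA; apply: le_trans (ler_wpM2l hk_ge0 Psi_gap_le) _.
exact: ler_piMl (ltW M_gt0) hk_le1.
Qed.

Lemma position_bounded n : x n <= M.
Proof.
elim/ltn_ind: n => -[|n] IH; first exact: x0_le.
rewrite leNgt; apply/negP => Mx.
have vn_le : v n <= v 0.
  apply: le_trans (velocity_decay_until (fun m mn => IH m (ltnW mn))) _.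
  by rewrite ler_piMr ?v_ge0 // exprn_ile1 ?rate_ge0 ?rate_le1.
have x_le2M : x n.+1 <= M + M.
  have := ler_wpM2l h_ge0 vn_le; have := x_step n; have := IH n (ltnSn n).
  have := hv0_le_M; lra.
have Psi_Mx : Psi K M < Psi K (x n.+1).
  apply: Psi_lt Mx _.
  by have := ler_wpM2l (ltW K_gt0) x_le2M; have := KM_le; lra.
move: Psi_Mx; rewrite -subr_gt0 => /(mulr_gt0 kappa_gt0).
by have := lyapunov_until IH; have := v_ge0 n.+1; have := v0_lt; lra.
Qed.

Lemma velocity_decay n : v n <= v 0 * r ^+ n.
Proof. exact: velocity_decay_until (fun m _ => position_bounded m). Qed.

End Lyapunov.

Lemma exprn_le_expR (R : realType) (t : R) (n : nat) :
  0 <= 1 - t -> (1 - t) ^+ n <= expR (- t * n%:R).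
Proof.
move=> t_le1; apply: (@le_trans _ _ (expR (- t) ^+ n)).
  apply: lerXn2r; rewrite ?nnegrE ?expR_ge0 //.
  by have := expR_ge1Dx (- t); rewrite addrC.
by rewrite mulrC expRM_natl.
Qed.

Lemma is_derive_Psi (R : realType) (K x : R) : is_derive x (1 : R) (Psi K) (1 - K * x).
Proof.
change (is_derive x (1 : R) (fun s : R => s - K / 2 * s ^+ 2) (1 - K * x)).
apply: is_derive_eq.
by rewrite -[X in _ - X = _]/((K / 2) * (x * 1 + x * 1)); field.
Qed.

Lemma Rintegral_Psi (R : realType) (K a b : R) : a < b ->
  \int[@lebesgue_measure R]_(s in `[a, b]) (1 - K * s) = Psi K b - Psi K a.
Proof.
move=> ab.
have dPsi x := is_derive_Psi K x.
have cPsi : continuous (Psi K).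
  move=> x; apply: differentiable_continuous; apply/derivable1_diffP.
  exact: (@ex_derive _ _ _ _ _ _ _ (dPsi x)).
have caff : continuous (fun s : R => 1 - K * s).
  by move=> x; apply: continuousB; [exact: cst_continuous | apply: continuousM; [exact: cst_continuous | exact: id]].
rewrite /Rintegral (continuous_FTC2 (F := Psi K) ab) //.
- exact: continuous_subspaceT.
- split.
  + by move=> x _; exact: (@ex_derive _ _ _ _ _ _ _ (dPsi x)).
  + exact/cvg_at_right_filter/cPsi.
  + exact/cvg_at_left_filter/cPsi.
- by move=> x _; rewrite derive1E derive_val.
Qed.

Lemma phiLipN_gt0 (R : realType) (N : nat) (La c1 c2 : R) :
  (0 < N)%N -> 0 < La -> 0 < c1 -> c1 <= c2 -> 0 < phiLip N La c1 c2 * N%:R.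
Proof.
move=> N_gt0 La_gt0 c1_gt0 c12; have c2_gt0 := lt_le_trans c1_gt0 c12.
by rewrite /phiLip !mulr_gt0 ?ltr0n ?invr_gt0 ?mulr_gt0 ?ltr0n ?addr_gt0 ?divr_gt0.
Qed.

Lemma phiLipN_MTM (R : realType) (N : nat) (La c1 c2 : R) :
  0 < phiLip N La c1 c2 * N%:R -> 4 * (phiLip N La c1 c2 * N%:R * MTM N La c1 c2) = 1.
Proof.
move=> K_gt0; rewrite /MTM; field.
by move: K_gt0; rewrite lt0r mulf_eq0 negb_or => /andP[].
Qed.

Section Flocking.
Variables (R : realType) (N d : nat) (a : R -> R) (c1 c2 La kappa h : R).
Variables X V : nat -> 'I_N -> 'rV[R]_d.
Hypotheses (N_gt0 : (0 < N)%N) (c1_gt0 : 0 < c1) (c1_le_c2 : c1 <= c2).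
Hypotheses (La_gt0 : 0 < La) (kappa_gt0 : 0 < kappa) (h_gt0 : 0 < h).
Hypothesis hk_lt1 : h * kappa < 1.
Hypothesis a_bounds : forall r, 0 <= r -> c1 <= a r /\ a r <= c2.
Hypothesis a_lip :
  forall r1 r2, 0 <= r1 -> 0 <= r2 -> `|a r1 - a r2| <= La * `|r1 - r2|.
Hypothesis sol : is_MT_solution a kappa h X V.
Let K := phiLip N La c1 c2 * N%:R.
Let M := MTM N La c1 c2.
Hypothesis X0_lt : frob (X 0) < M.
Hypothesis V0_lt : frob (V 0) < kappa * (Psi K M - Psi K (frob (X 0))).

Let K_gt0 : 0 < K := phiLipN_gt0 N_gt0 La_gt0 c1_gt0 c1_le_c2.
Let KM_le : 4 * (K * M) <= 1. Proof. by rewrite phiLipN_MTM. Qed.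
Let M_gt0 : 0 < M.
Proof.
have KM : 4 * (K * M) = 1 := phiLipN_MTM K_gt0.
by rewrite -(pmulr_rgt0 _ K_gt0); lra.
Qed.
Let x_ge0 n : 0 <= frob (X n) := frob_ge0 (X n).
Let v_ge0 n : 0 <= frob (V n) := frob_ge0 (V n).
Let x_step n := mt_position_step sol n (ltW h_gt0).
Let v_step n := mt_velocity_step sol N_gt0 c1_gt0 c1_le_c2 (ltW La_gt0) a_bounds a_lip n
  (mulr_ge0 (ltW h_gt0) (ltW kappa_gt0)) (ltW hk_lt1).

Lemma mt_position_bounded n : frob (X n) <= MTM N La c1 c2.
Proof.
exact: position_bounded K_gt0 M_gt0 KM_le kappa_gt0 (ltW h_gt0) (ltW hk_lt1)
  x_ge0 v_ge0 x_step v_step (ltW X0_lt) V0_lt n.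
Qed.

Lemma mt_velocity_decay n :
  frob (V n) <= frob (V 0) * (1 - h * kappa * MTpsi N La c1 c2 (MTM N La c1 c2)) ^+ n.
Proof.
exact: velocity_decay K_gt0 M_gt0 KM_le kappa_gt0 (ltW h_gt0) (ltW hk_lt1)
  x_ge0 v_ge0 x_step v_step (ltW X0_lt) V0_lt n.
Qed.

End Flocking.

Theorem theorem3p4 (R : realType) (N d : nat) (kappa : R) (a : R -> R)
  (c1 c2 La : R) (X0 V0 : 'I_N -> 'rV[R]_d) :
  (1 <= N)%N -> (1 <= d)%N -> 0 < kappa ->
  0 < c1 -> c1 <= c2 ->
  (forall r, 0 <= r -> c1 <= a r /\ a r <= c2) ->
  0 < La ->
  (forall r1 r2, 0 <= r1 -> 0 <= r2 -> `|a r1 - a r2| <= La * `|r1 - r2|) ->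
  frob X0 < MTM N La c1 c2 ->
  frob V0 < kappa * (\int[@lebesgue_measure R]_(s in `[frob X0, MTM N La c1 c2])
                       MTpsi N La c1 c2 s) ->
  (* (i) *)
  (forall (h : R), 0 < h -> h < Num.min 1 (1 / kappa) ->
     forall X V : nat -> 'I_N -> 'rV[R]_d,
       is_MT_solution a kappa h X V -> X 0%N = X0 -> V 0%N = V0 ->
       forall n : nat, frob (X n) <= MTM N La c1 c2)
  /\
  (* (ii) *)
  (forall C : R, 0 < C -> C < 1 ->
     exists h0 : R, 0 < h0 /\
       forall (h : R), 0 < h -> h < h0 -> h < Num.min 1 (1 / kappa) ->
         forall X V : nat -> 'I_N -> 'rV[R]_d,
           is_MT_solution a kappa h X V -> X 0%N = X0 -> V 0%N = V0 ->
           forall n : nat,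
             frob (V n) <= frob V0 *
               expR (- (C * kappa * MTpsi N La c1 c2 (MTM N La c1 c2) * n%:R * h))).
Proof.
move=> N_gt0 _ kappa_gt0 c1_gt0 c12 a_bounds La_gt0 a_lip X0_lt V0_lt.
rewrite Rintegral_Psi // in V0_lt.
have hk_lt1 h : h < Num.min 1 (1 / kappa) -> h * kappa < 1.
  by rewrite lt_min ltr_pdivlMr // => /andP[].
split=> [h h_gt0 /hk_lt1 hk X V sol X_0 V_0 n | C C_gt0 C_lt1]; subst.
  exact: mt_position_bounded N_gt0 c1_gt0 c12 La_gt0 kappa_gt0 h_gt0 hk a_bounds a_lip
    sol X0_lt V0_lt n.
(* The contraction factor 1 - h kappa psi(M) already yields the rate with C = 1 for
   every admissible step, so any h0 will do. *)
exists 1; split=> // h h_gt0 _ /hk_lt1 hk X V sol X_0 V_0 n; subst.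
have psiM : MTpsi N La c1 c2 (MTM N La c1 c2) = 3 / 4.
  by have := phiLipN_MTM (phiLipN_gt0 N_gt0 La_gt0 c1_gt0 c12); rewrite /MTpsi; lra.
apply: le_trans (mt_velocity_decay N_gt0 c1_gt0 c12 La_gt0 kappa_gt0 h_gt0 hk a_bounds
  a_lip sol X0_lt V0_lt n) _.
rewrite ler_wpM2l ?frob_ge0 //; apply: le_trans (exprn_le_expR _ _) _.
  by rewrite psiM; lra.
have hkn_ge0 : 0 <= h * kappa * n%:R by rewrite !mulr_ge0 ?ler0n ?ltW.
have : 0 <= (1 - C) * (h * kappa * n%:R) by rewrite mulr_ge0 // subr_ge0 ltW.
by rewrite ler_expR psiM; lra.
Qed.
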